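(* For $b\in(0,\pi/2)$ let $I_1(b)=\int_{-b}^{b}\frac{\cos^5\varphi}{\sqrt{\cos^4\varphi-\cos^4b}}\,d\varphi$ and $I_2(b)=\int_{-b}^{b}\frac{\cos^3\varphi}{\sqrt{\cos^4\varphi-\cos^4b}}\,d\varphi$. Then the function $b\mapsto\frac{I_1(b)}{I_2(b)^3}$ is decreasing on $(0,\pi/2)$. *)

From Stdlib Require Import Reals Lra.
Open Scope R_scope.

Definition improper_integral (f : R -> R) (a b l : R) : Prop :=
  (forall c d, a < c -> c <= d -> d < b -> inhabited (Riemann_integrable f c d)) /\
  (forall eps, eps > 0 -> exists delta, delta > 0 /\
     forall c d (pr : Riemann_integrable f c d),
       a < c -> c < a + delta -> b - delta < d -> d < b -> c <= d ->
       Rabs (RiemannInt pr - l) < eps).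

Definition f1 (b : R) (phi : R) : R :=
  cos phi ^ 5 / sqrt (cos phi ^ 4 - cos b ^ 4).

Definition f2 (b : R) (phi : R) : R :=
  cos phi ^ 3 / sqrt (cos phi ^ 4 - cos b ^ 4).

(* For 0 < b < PI/2 put k = sin b.  The substitution sin phi = k sin theta
   turns the singular integrals I_1, I_2 over (-b, b) into proper integrals
   over [-PI/2, PI/2] of continuous functions; since the new integration
   variable tends to -PI/2, PI/2 at the ends, the improper integrals exist and
   equal these proper ones, by a general change-of-variables lemma.
   With alpha = 2 - k^2 and modulus m = k^2 / alpha, the new integrands are
   combinations of powers of W = 1 - m sin^2 theta, so that
       I_2 = alpha^(1/2) (E - (1-m)/2 K),
       I_1 = alpha^(3/2) ((1+m)/3 E - (1-m)(1+3m)/12 K),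
   where E, K are complete elliptic integrals; the W^(3/2) integral is
   eliminated by an exact-derivative identity.  Hence I_1/I_2^3 is a function
   R(m) = N(m)/D(m)^3 of m alone (N, D the brackets above), and m increases
   with b.  Legendre's formulas for E', K' give
   R'(m) = -(1-m) E (E - (1-m) K) / (8 m D^4), negative because
   (1-m) K < E; the mean value theorem concludes. *)

From Stdlib Require Import Reals Lra.
From Coquelicot Require Import Coquelicot.
Open Scope R_scope.

Lemma cos2_sin2 t : cos t ^ 2 = 1 - sin t ^ 2.
Proof. pose proof (sin2_cos2 t). unfold Rsqr in H. lra. Qed.

Lemma sin2_bounds t : 0 <= sin t ^ 2 <= 1.
Proof. pose proof (sin2_cos2 t). unfold Rsqr in H. split; nra. Qed.

Lemma continuous_eps_delta (h : R -> R) (x eps : R) :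
  continuous h x -> 0 < eps ->
  exists delta, 0 < delta /\ forall y, Rabs (y - x) < delta -> Rabs (h y - h x) < eps.
Proof.
  intros hc heps.
  destruct (proj1 (filterlim_locally h (h x)) hc (mkposreal eps heps)) as [d hd].
  exists d. split; [apply cond_pos | exact hd].
Qed.

Lemma RInt_near_bounds (g : R -> R) (A B eps : R) :
  (forall x, continuous g x) -> 0 < eps ->
  exists eta, 0 < eta /\ forall u v, Rabs (u - A) < eta -> Rabs (v - B) < eta ->
    Rabs (RInt g u v - RInt g A B) < eps.
Proof.
  intros hg heps.
  assert (hc : continuous (fun z : R * R => RInt g (fst z) (snd z)) (A, B)).
  { apply (continuous_RInt g A B (fun u v => RInt g u v)).
    apply filter_forall. intros z.
    apply (RInt_correct (V := R_CompleteNormedModule)).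
    apply (ex_RInt_continuous (V := R_CompleteNormedModule)). intros; apply hg. }
  destruct (proj1 (filterlim_locally _ _) hc (mkposreal eps heps)) as [d hd].
  exists d. split; [apply cond_pos|].
  intros u v hu hv. exact (hd (u, v) (conj hu hv)).
Qed.

(* This is what removes the singularities of I_1, I_2. *)
Lemma improper_integral_subst (f g th dth : R -> R) (a b : R) :
  (forall x, continuous g x) ->
  (forall x, a < x < b -> is_derive th x (dth x) /\ continuous dth x) ->
  continuous th a -> continuous th b ->
  (forall x, a < x < b -> f x = dth x * g (th x)) ->
  improper_integral f a b (RInt g (th a) (th b)).
Proof.
  intros hg hth hca hcb hf.
  assert (hsub : forall c d, a < c -> c <= d -> d < b ->
            is_RInt f c d (RInt g (th c) (th d))).
  { intros c d hc hcd hd.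
    eapply is_RInt_ext.
    2: { apply (is_RInt_comp g th dth); intros x hx; [apply hg|].
         apply hth. rewrite Rmin_left, Rmax_right in hx by exact hcd. lra. }
    intros x hx. rewrite Rmin_left, Rmax_right in hx by exact hcd.
    symmetry. apply hf. lra. }
  split.
  - intros c d hc hcd hd. constructor. apply ex_RInt_Reals_0.
    eexists. exact (hsub c d hc hcd hd).
  - intros eps heps.
    destruct (RInt_near_bounds g (th a) (th b) eps hg heps) as [eta [heta Hnear]].
    destruct (continuous_eps_delta th a eta hca heta) as [da [hda Ha]].
    destruct (continuous_eps_delta th b eta hcb heta) as [db [hdb Hb]].
    exists (Rmin da db). split; [apply Rmin_glb_lt; assumption|].
    intros c d pr hc1 hc2 hd1 hd2 hcd.
    pose proof (Rmin_l da db). pose proof (Rmin_r da db).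
    rewrite <- (RInt_Reals f c d pr), (is_RInt_unique f c d _ (hsub c d hc1 hcd hd2)).
    apply Hnear; [apply Ha | apply Hb]; apply Rabs_def1; lra.
Qed.

(* [asin] is continuous at 1: it tends to PI/2 from the left and is constant
   equal to PI/2 on [1, +oo). *)
Lemma asin_continuous_1 : continuous asin 1.
Proof.
  apply (proj2 (filterlim_locally _ _)). intros [eps heps]. rewrite asin_1.
  pose proof PI_RGT_0.
  set (e := Rmin eps (PI / 2)).
  assert (he : 0 < e <= PI / 2) by (split; [apply Rmin_glb_lt | apply Rmin_r]; lra).
  assert (hy0 : 0 <= sin (PI / 2 - e) < 1).
  { split; [apply sin_ge_0; lra|].
    rewrite <- sin_PI2. apply sin_increasing_1; lra. }
  exists (mkposreal (1 - sin (PI / 2 - e)) ltac:(simpl; lra)).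
  intros x hx. change (Rabs (x - 1) < 1 - sin (PI / 2 - e)) in hx.
  change (Rabs (asin x - PI / 2) < eps).
  assert (e <= eps) by apply Rmin_l. pose proof (asin_bound x).
  destruct (Rle_lt_dec 1 x) as [hx1 | hx1].
  - replace (asin x) with (PI / 2) by (unfold asin; repeat case Rle_dec; lra).
    rewrite Rminus_diag, Rabs_R0. exact heps.
  - apply Rabs_def2 in hx.
    assert (hlow : PI / 2 - e < asin x).
    { apply sin_increasing_0; try lra. rewrite sin_asin; lra. }
    rewrite Rabs_left1; lra.
Qed.

(* By oddness, [asin] is continuous at -1 as well. *)
Lemma asin_continuous_m1 : continuous asin (-1).
Proof.
  apply (continuous_ext (fun x => - asin (- x))).
  { intros x. rewrite asin_opp. apply Ropp_involutive. }
  apply (continuous_opp (fun x => asin (- x))).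
  apply (continuous_comp Ropp asin).
  - apply (ex_derive_continuous (V := R_NormedModule)). auto_derive. auto.
  - replace (Ropp (-1)) with 1 by ring. exact asin_continuous_1.
Qed.

(* The substitution sin phi = k sin theta, i.e. theta = asin (sin phi / k),
   and its derivative on |sin phi| < k. *)
Definition theta (k phi : R) := asin (sin phi / k).
Definition dtheta (k phi : R) := cos phi / sqrt (k ^ 2 - sin phi ^ 2).

Lemma theta_derive k phi : 0 < k -> Rabs (sin phi) < k ->
  is_derive (theta k) phi (dtheta k phi).
Proof.
  intros hk hs. apply Rabs_def2 in hs.
  assert (hx : -1 < sin phi / k < 1).
  { split; apply (Rmult_lt_reg_r k); auto;
      unfold Rdiv; rewrite Rmult_assoc, Rinv_l; lra. }
  assert (Hasin : is_derive asin (sin phi / k) (1 / sqrt (1 - (sin phi / k)²))).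
  { apply is_derive_Reals. rewrite <- (derive_pt_asin _ hx).
    eapply derive_pt_eq_1. reflexivity. }
  assert (Hquot : is_derive (fun p => sin p / k) phi (cos phi / k)).
  { auto_derive; [auto|]. field. lra. }
  unfold theta.
  replace (dtheta k phi) with (cos phi / k * (1 / sqrt (1 - (sin phi / k)²))).
  { exact (is_derive_comp asin (fun p => sin p / k) phi _ _ Hasin Hquot). }
  unfold dtheta.
  assert (e : k ^ 2 - sin phi ^ 2 = k² * (1 - (sin phi / k)²)).
  { unfold Rsqr. field. lra. }
  assert (0 < 1 - (sin phi / k)²) by (unfold Rsqr; nra).
  rewrite e, sqrt_mult, sqrt_Rsqr by (try apply Rle_0_sqr; lra).
  field. split; [|lra]. apply Rgt_not_eq, sqrt_lt_R0. lra.
Qed.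

Lemma dtheta_continuous k phi : Rabs (sin phi) < k -> continuous (dtheta k) phi.
Proof.
  intros hs. apply (ex_derive_continuous (V := R_NormedModule)).
  assert (0 < k ^ 2 - sin phi ^ 2) by (apply Rabs_def2 in hs; nra).
  unfold dtheta. auto_derive. repeat split; try lra.
  apply Rgt_not_eq, sqrt_lt_R0. lra.
Qed.

Lemma sin_theta k phi : 0 < k -> Rabs (sin phi) < k -> sin (theta k phi) = sin phi / k.
Proof.
  intros hk hs. apply Rabs_def2 in hs. unfold theta. apply sin_asin.
  split; apply (Rmult_le_reg_r k); auto; unfold Rdiv; rewrite Rmult_assoc, Rinv_l; lra.
Qed.

Lemma sin_sq_range b : 0 < b < PI / 2 -> 0 < sin b ^ 2 < 1.
Proof.
  intros hb. pose proof PI_RGT_0.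
  assert (0 < sin b) by (apply sin_gt_0; lra).
  assert (sin b < 1) by (rewrite <- sin_PI2; apply sin_increasing_1; lra).
  split; nra.
Qed.

Lemma sin_abs_lt b x : 0 < b < PI / 2 -> - b < x < b -> Rabs (sin x) < sin b.
Proof.
  intros hb hx. pose proof PI_RGT_0.
  assert (hq : sin (- x) < sin b) by (apply sin_increasing_1; lra).
  rewrite sin_neg in hq.
  apply Rabs_def1; [apply sin_increasing_1 |]; lra.
Qed.

(* For k = sin b, theta sends -b and b to -PI/2 and PI/2 and is continuous
   there, so the singular endpoints become regular ones. *)
Lemma theta_ends b : 0 < b < PI / 2 ->
  theta (sin b) b = PI / 2 /\ theta (sin b) (- b) = - (PI / 2) /\
  continuous (theta (sin b)) b /\ continuous (theta (sin b)) (- b).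
Proof.
  intros hb.
  assert (hk : 0 < sin b) by (apply sin_gt_0; pose proof PI_RGT_0; lra).
  assert (e1 : sin b / sin b = 1) by (field; lra).
  assert (e2 : sin (- b) / sin b = -1) by (rewrite sin_neg; field; lra).
  assert (hcont : forall phi, continuous asin (sin phi / sin b) ->
            continuous (theta (sin b)) phi).
  { intros phi ha. apply (continuous_comp (fun p => sin p / sin b) asin); [|exact ha].
    apply (ex_derive_continuous (V := R_NormedModule)). auto_derive. lra. }
  assert (em1 : asin (-1) = - (PI / 2)) by (unfold asin; repeat case Rle_dec; lra).
  unfold theta at 1 2. rewrite e1, e2, asin_1, em1.
  repeat split; apply hcont;
    [rewrite e1; exact asin_continuous_1 | rewrite e2; exact asin_continuous_m1].
Qed.

Lemma improper_by_theta b (f g : R -> R) : 0 < b < PI / 2 ->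
  (forall x, continuous g x) ->
  (forall phi, - b < phi < b ->
     f phi = dtheta (sin b) phi * g (theta (sin b) phi)) ->
  improper_integral f (- b) b (RInt g (- (PI / 2)) (PI / 2)).
Proof.
  intros hb hg hf.
  assert (hk : 0 < sin b) by (apply sin_gt_0; pose proof PI_RGT_0; lra).
  destruct (theta_ends b hb) as [eb [emb [cb cmb]]].
  rewrite <- emb, <- eb.
  apply (improper_integral_subst f g (theta (sin b)) (dtheta (sin b)));
    [exact hg | | exact cmb | exact cb | exact hf].
  intros x hx. pose proof (sin_abs_lt b x hb hx).
  split; [apply theta_derive | apply dtheta_continuous]; assumption.
Qed.

Definition W (m t : R) := 1 - m * sin t ^ 2.

Lemma W_pos m t : m < 1 -> 0 < W m t.
Proof.
  intros hm. unfold W. pose proof (sin2_bounds t).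
  destruct (Rle_lt_dec 0 m); nra.
Qed.

Definition derivable_on_pos (F : R -> R) : Prop := forall w, 0 < w -> ex_derive F w.

(* [ellint F m] integrates F (W m t) over [-PI/2, PI/2]; [ellE] and [ellK]
   are twice the complete elliptic integrals E(m) and K(m) of the second and
   first kind. *)
Definition ellint (F : R -> R) (m : R) : R :=
  RInt (fun t => F (W m t)) (- (PI / 2)) (PI / 2).
Definition ellE : R -> R := ellint sqrt.
Definition ellK : R -> R := ellint (fun w => / sqrt w).

Lemma derivable_sqrt : derivable_on_pos sqrt.
Proof. intros w hw. auto_derive. exact hw. Qed.

Lemma derivable_inv_sqrt : derivable_on_pos (fun w => / sqrt w).
Proof.
  intros w hw. auto_derive. repeat split; [exact hw|].
  apply Rgt_not_eq, sqrt_lt_R0, hw.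
Qed.

Lemma derivable_pow32 : derivable_on_pos (fun w => w * sqrt w).
Proof. intros w hw. auto_derive. exact hw. Qed.

Lemma derivable_powm32 : derivable_on_pos (fun w => / (w * sqrt w)).
Proof.
  intros w hw. auto_derive. repeat split; [exact hw|].
  apply Rgt_not_eq, Rmult_lt_0_compat; [exact hw | apply sqrt_lt_R0, hw].
Qed.

Lemma derivable_on_pos_lin2 (F G : R -> R) (x y : R) :
  derivable_on_pos F -> derivable_on_pos G ->
  derivable_on_pos (fun w => x * F w + y * G w).
Proof.
  intros hF hG w hw.
  apply (ex_derive_plus (fun w => x * F w)); apply ex_derive_scal; auto.
Qed.

Lemma derivable_on_pos_lin3 (F G H : R -> R) (x y z : R) :
  derivable_on_pos F -> derivable_on_pos G -> derivable_on_pos H ->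
  derivable_on_pos (fun w => x * F w + y * G w + z * H w).
Proof.
  intros hF hG hH w hw.
  apply (ex_derive_plus (fun w => x * F w + y * G w));
    [apply (ex_derive_plus (fun w => x * F w)) |];
    apply ex_derive_scal; auto.
Qed.

Lemma continuous_W_comp (F : R -> R) (m t : R) :
  derivable_on_pos F -> m < 1 -> continuous (fun t => F (W m t)) t.
Proof.
  intros hF hm. apply (ex_derive_continuous (V := R_NormedModule)).
  apply (ex_derive_comp F (W m)); [apply hF, W_pos, hm|].
  unfold W. auto_derive. exact I.
Qed.

Lemma ex_RInt_W_comp (F : R -> R) (m a b : R) :
  derivable_on_pos F -> m < 1 -> ex_RInt (fun t => F (W m t)) a b.
Proof.
  intros hF hm. apply (ex_RInt_continuous (V := R_CompleteNormedModule)).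
  intros t _. apply continuous_W_comp; assumption.
Qed.

(* [RInt_ext] with the pointwise equality stated in [R], so that [field]
   applies to it. *)
Lemma RInt_ext_R (f g : R -> R) (a b : R) :
  (forall x, Rmin a b < x < Rmax a b -> f x = g x) -> RInt f a b = RInt g a b.
Proof. apply RInt_ext. Qed.

Lemma RInt_lin2 (p q : R -> R) (a b x y : R) :
  ex_RInt p a b -> ex_RInt q a b ->
  RInt (fun t => x * p t + y * q t) a b = x * RInt p a b + y * RInt q a b.
Proof.
  intros hp hq. apply (is_RInt_unique (V := R_CompleteNormedModule)).
  apply (is_RInt_plus (V := R_NormedModule) (fun t => x * p t) (fun t => y * q t));
    apply (is_RInt_scal (V := R_NormedModule));
    apply (RInt_correct (V := R_CompleteNormedModule)); assumption.
Qed.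

Lemma RInt_lin3 (p q r : R -> R) (a b x y z : R) :
  ex_RInt p a b -> ex_RInt q a b -> ex_RInt r a b ->
  RInt (fun t => x * p t + y * q t + z * r t) a b =
  x * RInt p a b + y * RInt q a b + z * RInt r a b.
Proof.
  intros hp hq hr. apply (is_RInt_unique (V := R_CompleteNormedModule)).
  apply (is_RInt_plus (V := R_NormedModule) (fun t => x * p t + y * q t) (fun t => z * r t));
    [apply (is_RInt_plus (V := R_NormedModule) (fun t => x * p t) (fun t => y * q t))|];
    apply (is_RInt_scal (V := R_NormedModule));
    apply (RInt_correct (V := R_CompleteNormedModule)); assumption.
Qed.

Lemma ellint_lin2 (F G : R -> R) (m x y : R) :
  derivable_on_pos F -> derivable_on_pos G -> m < 1 ->
  RInt (fun t => x * F (W m t) + y * G (W m t)) (- (PI / 2)) (PI / 2) =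
  x * ellint F m + y * ellint G m.
Proof. intros hF hG hm. apply RInt_lin2; apply ex_RInt_W_comp; assumption. Qed.

Lemma ellint_lin3 (F G H : R -> R) (m x y z : R) :
  derivable_on_pos F -> derivable_on_pos G -> derivable_on_pos H -> m < 1 ->
  RInt (fun t => x * F (W m t) + y * G (W m t) + z * H (W m t)) (- (PI / 2)) (PI / 2) =
  x * ellint F m + y * ellint G m + z * ellint H m.
Proof. intros hF hG hH hm. apply RInt_lin3; apply ex_RInt_W_comp; assumption. Qed.

(* The integral of an exact derivative whose primitive vanishes at both
   bounds is zero; source of the linear relations between elliptic integrals. *)
Lemma RInt_exact_zero (F dF : R -> R) (a b : R) :
  (forall t, Rmin a b <= t <= Rmax a b -> is_derive F t (dF t) /\ continuous dF t) ->
  F a = 0 -> F b = 0 -> RInt dF a b = 0.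
Proof.
  intros hF ha hb. apply (is_RInt_unique (V := R_CompleteNormedModule)).
  replace 0 with (minus (F b) (F a)) by (rewrite ha, hb; unfold minus, plus, opp; simpl; ring).
  apply (is_RInt_derive (V := R_CompleteNormedModule)); intros t ht; apply hF, ht.
Qed.

Lemma sqrtW_facts m t : m < 1 ->
  0 < W m t /\ 0 < sqrt (W m t) /\ sqrt (W m t) * sqrt (W m t) = W m t.
Proof.
  intros hm. pose proof (W_pos m t hm).
  repeat split; [lra | apply sqrt_lt_R0; lra | apply sqrt_sqrt; lra].
Qed.

Lemma primitive_pow32_derive m t : m < 1 ->
  is_derive (fun t => m * (sin t * cos t * sqrt (W m t))) t
    (3 * (W m t * sqrt (W m t)) + (2 * m - 4) * sqrt (W m t) + (1 - m) * / sqrt (W m t)).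
Proof.
  intros hm. destruct (sqrtW_facts m t hm) as [hw [hr hrr]].
  unfold W in *. auto_derive; [lra|].
  change (1 + - (m * (sin t * (sin t * 1)))) with (1 - m * sin t ^ 2).
  set (r := sqrt (1 - m * sin t ^ 2)) in *.
  field_simplify_eq; [|lra].
  replace (r ^ 2) with (1 - m * sin t ^ 2) by (rewrite <- hrr; ring).
  rewrite cos2_sin2. ring.
Qed.

Lemma primitive_powm32_derive m t : m < 1 ->
  is_derive (fun t => m * (sin t * cos t / sqrt (W m t))) t
    (sqrt (W m t) - (1 - m) * / (W m t * sqrt (W m t))).
Proof.
  intros hm. destruct (sqrtW_facts m t hm) as [hw [hr hrr]].
  unfold W in *. auto_derive; [repeat split; [lra | apply Rgt_not_eq, hr]|].
  change (1 + - (m * (sin t * (sin t * 1)))) with (1 - m * sin t ^ 2).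
  set (r := sqrt (1 - m * sin t ^ 2)) in *.
  rewrite <- hrr.
  field_simplify_eq; [|lra].
  replace (r ^ 2) with (1 - m * sin t ^ 2) by (rewrite <- hrr; ring).
  replace (r ^ 4) with ((1 - m * sin t ^ 2) ^ 2) by (rewrite <- hrr; ring).
  rewrite cos2_sin2. ring.
Qed.

Lemma ellint_pow32 m : m < 1 ->
  3 * ellint (fun w => w * sqrt w) m = (4 - 2 * m) * ellE m - (1 - m) * ellK m.
Proof.
  intros hm.
  assert (hexact : RInt (fun t => 3 * (W m t * sqrt (W m t)) + (2 * m - 4) * sqrt (W m t)
                             + (1 - m) * / sqrt (W m t)) (- (PI / 2)) (PI / 2) = 0).
  { apply (RInt_exact_zero (fun t => m * (sin t * cos t * sqrt (W m t)))).
    - intros t _. split; [apply primitive_pow32_derive, hm|].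
      apply (continuous_W_comp (fun w => 3 * (w * sqrt w) + (2 * m - 4) * sqrt w
                                         + (1 - m) * / sqrt w)); [|exact hm].
      apply derivable_on_pos_lin3;
        [exact derivable_pow32 | exact derivable_sqrt | exact derivable_inv_sqrt].
    - rewrite cos_neg, cos_PI2. ring.
    - rewrite cos_PI2. ring. }
  rewrite (ellint_lin3 (fun w => w * sqrt w) sqrt (fun w => / sqrt w)) in hexact
    by first [exact derivable_pow32 | exact derivable_sqrt
             | exact derivable_inv_sqrt | exact hm].
  unfold ellE, ellK. lra.
Qed.

Lemma ellint_powm32 m : m < 1 ->
  (1 - m) * ellint (fun w => / (w * sqrt w)) m = ellE m.
Proof.
  intros hm.
  assert (hexact : RInt (fun t => 1 * sqrt (W m t) + (m - 1) * / (W m t * sqrt (W m t)))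
                 (- (PI / 2)) (PI / 2) = 0).
  { apply (RInt_exact_zero (fun t => m * (sin t * cos t / sqrt (W m t)))).
    - intros t _. split.
      + replace (1 * sqrt (W m t) + (m - 1) * / (W m t * sqrt (W m t)))
          with (sqrt (W m t) - (1 - m) * / (W m t * sqrt (W m t))) by ring.
        apply primitive_powm32_derive, hm.
      + apply (continuous_W_comp (fun w => 1 * sqrt w + (m - 1) * / (w * sqrt w)));
          [|exact hm].
        apply derivable_on_pos_lin2; [exact derivable_sqrt | exact derivable_powm32].
    - rewrite cos_neg, cos_PI2. unfold Rdiv. ring.
    - rewrite cos_PI2. unfold Rdiv. ring. }
  rewrite (ellint_lin2 sqrt (fun w => / (w * sqrt w))) in hexact
    by first [exact derivable_sqrt | exact derivable_powm32 | exact hm].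
  unfold ellE. lra.
Qed.

(* Joint continuity of W in (m, t), needed to differentiate under the integral. *)
Lemma sin2_continuity_2d u t : continuity_2d_pt (fun _ v => sin v ^ 2) u t.
Proof.
  apply (continuity_1d_2d_pt_comp (fun v => sin v ^ 2) (fun _ v => v));
    [|apply continuity_2d_pt_id2].
  apply continuity_pt_filterlim, (ex_derive_continuous (V := R_NormedModule)).
  auto_derive. exact I.
Qed.

Lemma W_continuity_2d u t : continuity_2d_pt W u t.
Proof.
  unfold W. apply (continuity_2d_pt_minus (fun _ _ => 1) (fun u v => u * sin v ^ 2)).
  - apply continuity_2d_pt_const.
  - apply (continuity_2d_pt_mult (fun u _ => u) (fun _ v => sin v ^ 2)).
    + apply continuity_2d_pt_id1.
    + apply sin2_continuity_2d.
Qed.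

Lemma ellint_derive (F F' : R -> R) (m : R) :
  (forall w, 0 < w -> is_derive F w (F' w)) ->
  (forall w, 0 < w -> continuous F' w) ->
  m < 1 ->
  is_derive (ellint F) m
    (RInt (fun t => - sin t ^ 2 * F' (W m t)) (- (PI / 2)) (PI / 2)).
Proof.
  intros hF hF' hm.
  assert (hder : forall u t, u < 1 ->
            is_derive (fun z => F (W z t)) u (- sin t ^ 2 * F' (W u t))).
  { intros u t hu.
    change (- sin t ^ 2 * F' (W u t)) with (scal (- sin t ^ 2) (F' (W u t))).
    apply (is_derive_comp F (fun z => W z t)); [apply hF, W_pos, hu|].
    unfold W. auto_derive; [exact I | ring]. }
  assert (hnear : forall P : R -> Prop, (forall u, u < 1 -> P u) -> locally m P).
  { intros P hP. apply (locally_interval P m m_infty 1); [exact I | exact hm |].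
    intros y _ hy. apply hP, hy. }
  unfold ellint.
  rewrite (RInt_ext (fun t => - sin t ^ 2 * F' (W m t))
             (fun t => Derive (fun u => F (W u t)) m))
    by (intros t _; symmetry; apply is_derive_unique, hder, hm).
  apply (is_derive_RInt_param (fun u t => F (W u t))).
  - apply hnear. intros u hu t _. eexists. apply hder, hu.
  - intros t _.
    apply continuity_2d_pt_ext_loc with (f := fun u v => - sin v ^ 2 * F' (W u v)).
    + exists (mkposreal (1 - m) ltac:(simpl; lra)). intros u v hu _.
      symmetry. apply is_derive_unique, hder.
      simpl in hu. apply Rabs_def2 in hu. lra.
    + apply (continuity_2d_pt_mult (fun _ v => - sin v ^ 2) (fun u v => F' (W u v))).
      * apply (continuity_2d_pt_opp (fun _ v => sin v ^ 2)), sin2_continuity_2d.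
      * apply (continuity_1d_2d_pt_comp F' W); [|apply W_continuity_2d].
        apply continuity_pt_filterlim, hF', W_pos, hm.
  - apply hnear. intros u hu. apply ex_RInt_W_comp; [|exact hu].
    intros w hw. eexists. apply hF, hw.
Qed.

Lemma ellE_derive m : 0 < m < 1 -> is_derive ellE m ((ellE m - ellK m) / (2 * m)).
Proof.
  intros hm.
  assert (hint : RInt (fun t => - sin t ^ 2 * / (2 * sqrt (W m t))) (- (PI / 2)) (PI / 2)
                 = (ellE m - ellK m) / (2 * m) :> R).
  { rewrite (RInt_ext_R _ (fun t => / (2 * m) * sqrt (W m t)
                                    + (- / (2 * m)) * / sqrt (W m t))).
    - rewrite (ellint_lin2 sqrt (fun w => / sqrt w))
        by first [exact derivable_sqrt | exact derivable_inv_sqrt | lra].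
      unfold ellE, ellK. field. lra.
    - intros t _. destruct (sqrtW_facts m t ltac:(lra)) as [hw [hr hrr]].
      replace (sin t ^ 2) with ((1 - W m t) / m) by (unfold W; field; lra).
      set (r := sqrt (W m t)) in *. rewrite <- hrr. field. lra. }
  rewrite <- hint.
  apply (ellint_derive sqrt (fun w => / (2 * sqrt w))); [| |lra].
  - intros w hw. auto_derive; [exact hw | ring].
  - intros w hw. apply (ex_derive_continuous (V := R_NormedModule)).
    auto_derive. repeat split; [exact hw|].
    apply Rgt_not_eq, Rmult_lt_0_compat; [lra | apply sqrt_lt_R0, hw].
Qed.

Lemma ellK_derive m : 0 < m < 1 ->
  is_derive ellK m ((ellE m / (1 - m) - ellK m) / (2 * m)).
Proof.
  intros hm.
  assert (hint : RInt (fun t => - sin t ^ 2 * - / (2 * (W m t * sqrt (W m t))))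
                   (- (PI / 2)) (PI / 2)
                 = (ellE m / (1 - m) - ellK m) / (2 * m) :> R).
  { rewrite (RInt_ext_R _ (fun t => / (2 * m) * / (W m t * sqrt (W m t))
                                    + (- / (2 * m)) * / sqrt (W m t))).
    - rewrite (ellint_lin2 (fun w => / (w * sqrt w)) (fun w => / sqrt w))
        by first [exact derivable_powm32 | exact derivable_inv_sqrt | lra].
      rewrite <- (ellint_powm32 m) by lra. unfold ellK. field. lra.
    - intros t _. destruct (sqrtW_facts m t ltac:(lra)) as [hw [hr hrr]].
      replace (sin t ^ 2) with ((1 - W m t) / m) by (unfold W; field; lra).
      field. lra. }
  rewrite <- hint.
  apply (ellint_derive (fun w => / sqrt w) (fun w => - / (2 * (w * sqrt w)))); [| |lra].
  - intros w hw. pose proof (sqrt_lt_R0 w hw) as hr.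
    pose proof (sqrt_sqrt w (Rlt_le _ _ hw)) as hrr.
    auto_derive; [repeat split; [exact hw | lra] |].
    set (r := sqrt w) in *. rewrite <- hrr. field. lra.
  - intros w hw. apply (ex_derive_continuous (V := R_NormedModule)).
    pose proof (sqrt_lt_R0 w hw).
    auto_derive. repeat split; [exact hw|].
    apply Rgt_not_eq. apply Rmult_lt_0_compat; [lra|]. apply Rmult_lt_0_compat; lra.
Qed.

(* Positivity facts: K > 0 and (1-m) K < E, since (1-m)/sqrt W < sqrt W. *)
Lemma ellK_pos m : m < 1 -> 0 < ellK m.
Proof.
  intros hm. pose proof PI_RGT_0. unfold ellK, ellint.
  apply RInt_gt_0; [lra| |].
  - intros t _. apply Rinv_0_lt_compat, sqrt_lt_R0, W_pos, hm.
  - intros t _. apply (continuous_W_comp (fun w => / sqrt w));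
      [exact derivable_inv_sqrt | exact hm].
Qed.

Lemma ellK_lt_ellE m : 0 < m < 1 -> (1 - m) * ellK m < ellE m.
Proof.
  intros hm. pose proof PI_RGT_0.
  assert (e : (1 - m) * ellK m =
              RInt (fun t => (1 - m) * / sqrt (W m t)) (- (PI / 2)) (PI / 2)).
  { unfold ellK, ellint. symmetry.
    apply (RInt_scal (V := R_CompleteNormedModule) (fun t => / sqrt (W m t))).
    apply (ex_RInt_W_comp (fun w => / sqrt w)); [exact derivable_inv_sqrt | lra]. }
  rewrite e. unfold ellE, ellint.
  apply RInt_lt; [lra | | |].
  - intros t _. apply (continuous_W_comp sqrt); [exact derivable_sqrt | lra].
  - intros t _. apply (continuous_W_comp (fun w => (1 - m) * / sqrt w)); [|lra].
    intros w hw. apply ex_derive_scal, derivable_inv_sqrt, hw.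
  - intros t ht. destruct (sqrtW_facts m t ltac:(lra)) as [hw [hr hrr]].
    assert (hs : sin t ^ 2 < 1).
    { assert (0 < cos t) by (apply cos_gt_0; lra). pose proof (cos2_sin2 t). nra. }
    apply (Rmult_lt_reg_r (sqrt (W m t))); [exact hr|].
    rewrite hrr, Rmult_assoc, Rinv_l by lra. unfold W. nra.
Qed.

(* The ratio I_1/I_2^3 in terms of the modulus: numer/denom^3, with numer
   and denom explicit combinations of E and K. *)
Definition numer (m : R) : R :=
  (1 + m) / 3 * ellE m - (1 - m) * (1 + 3 * m) / 12 * ellK m.
Definition denom (m : R) : R := ellE m - (1 - m) / 2 * ellK m.
Definition ratio (m : R) : R := numer m / denom m ^ 3.

Lemma denom_pos m : 0 < m < 1 -> 0 < denom m.
Proof.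
  intros hm. pose proof (ellK_lt_ellE m hm). pose proof (ellK_pos m ltac:(lra)).
  unfold denom. nra.
Qed.

(* Legendre's formulas in the forms produced by [auto_derive]. *)
Lemma ex_derive_ellE_ellK m : 0 < m < 1 -> ex_derive ellE m /\ ex_derive ellK m.
Proof.
  intros hm. split; eexists; [apply ellE_derive | apply ellK_derive]; exact hm.
Qed.

Lemma Derive_ellE_ellK m : 0 < m < 1 ->
  Derive (fun x => ellE x) m = (ellE m - ellK m) / (2 * m) /\
  Derive (fun x => ellK x) m = (ellE m / (1 - m) - ellK m) / (2 * m).
Proof.
  intros hm. split; apply is_derive_unique; [apply ellE_derive | apply ellK_derive]; exact hm.
Qed.

(* Closed forms of the derivatives; note numer' = (1+3m)/2 * denom'. *)
Lemma denom_derive m : 0 < m < 1 ->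
  is_derive denom m ((ellE m - (1 - m) * ellK m) / (4 * m)).
Proof.
  intros hm. destruct (ex_derive_ellE_ellK m hm). unfold denom.
  auto_derive; [auto|].
  destruct (Derive_ellE_ellK m hm) as [-> ->].
  field. lra.
Qed.

Lemma numer_derive m : 0 < m < 1 ->
  is_derive numer m ((1 + 3 * m) * (ellE m - (1 - m) * ellK m) / (8 * m)).
Proof.
  intros hm. destruct (ex_derive_ellE_ellK m hm). unfold numer.
  auto_derive; [auto|].
  destruct (Derive_ellE_ellK m hm) as [-> ->].
  field. lra.
Qed.

Lemma ratio_derive m : 0 < m < 1 ->
  is_derive ratio m
    (- ((1 - m) * ellE m * (ellE m - (1 - m) * ellK m)) / (8 * m * denom m ^ 4)).
Proof.
  intros hm. pose proof (denom_pos m hm) as hD.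
  unfold ratio. auto_derive.
  { repeat split; [eexists; apply numer_derive, hm | eexists; apply denom_derive, hm |].
    apply Rgt_not_eq. repeat apply Rmult_lt_0_compat; lra. }
  replace (Derive (fun x => numer x) m)
    with ((1 + 3 * m) * (ellE m - (1 - m) * ellK m) / (8 * m))
    by (symmetry; apply is_derive_unique, numer_derive, hm).
  replace (Derive (fun x => denom x) m) with ((ellE m - (1 - m) * ellK m) / (4 * m))
    by (symmetry; apply is_derive_unique, denom_derive, hm).
  unfold numer, denom in *. field. lra.
Qed.

Lemma decreasing_of_derive_neg (f f' : R -> R) (a b : R) :
  (forall x, a < x < b -> is_derive f x (f' x) /\ f' x < 0) ->
  forall x y, a < x -> x < y -> y < b -> f y < f x.
Proof.
  intros hf x y hx hxy hy.
  destruct (MVT_cor2 f f' x y hxy) as [c [hc1 hc2]].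
  - intros c hc. apply is_derive_Reals, hf. lra.
  - assert (f' c < 0) by (apply hf; lra). nra.
Qed.

Lemma ratio_decreasing m1 m2 : 0 < m1 -> m1 < m2 -> m2 < 1 -> ratio m2 < ratio m1.
Proof.
  apply (decreasing_of_derive_neg ratio
    (fun m => - ((1 - m) * ellE m * (ellE m - (1 - m) * ellK m)) / (8 * m * denom m ^ 4))).
  intros m hm. split; [apply ratio_derive, hm|].
  pose proof (ellK_lt_ellE m hm). pose proof (ellK_pos m ltac:(lra)).
  pose proof (denom_pos m hm).
  apply Rdiv_neg_pos; [|apply Rmult_lt_0_compat; [lra | apply pow_lt; lra]].
  assert (0 < ellE m) by nra.
  assert (0 < (1 - m) * ellE m) by nra.
  nra.
Qed.

(* The integrands of I_1 and I_2 after the substitution, for k = sin b,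
   and their integrals over [-PI/2, PI/2]. *)
Definition g1 (k t : R) : R :=
  (1 - k ^ 2 * sin t ^ 2) ^ 2 / sqrt (2 - k ^ 2 - k ^ 2 * sin t ^ 2).
Definition g2 (k t : R) : R :=
  (1 - k ^ 2 * sin t ^ 2) / sqrt (2 - k ^ 2 - k ^ 2 * sin t ^ 2).
Definition J1 (k : R) : R := RInt (g1 k) (- (PI / 2)) (PI / 2).
Definition J2 (k : R) : R := RInt (g2 k) (- (PI / 2)) (PI / 2).

(* The radicand of f1, f2 factors as (k^2 - sin^2 phi)(2 - k^2 - sin^2 phi),
   which is what makes theta the right substitution. *)
Lemma cos4_diff phi b :
  cos phi ^ 4 - cos b ^ 4 = (sin b ^ 2 - sin phi ^ 2) * (2 - sin b ^ 2 - sin phi ^ 2).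
Proof.
  replace (cos phi ^ 4) with ((cos phi ^ 2) ^ 2) by ring.
  replace (cos b ^ 4) with ((cos b ^ 2) ^ 2) by ring.
  rewrite !cos2_sin2. ring.
Qed.

Lemma integrands_subst b phi : 0 < b < PI / 2 -> - b < phi < b ->
  f1 b phi = dtheta (sin b) phi * g1 (sin b) (theta (sin b) phi) /\
  f2 b phi = dtheta (sin b) phi * g2 (sin b) (theta (sin b) phi).
Proof.
  intros hb hphi. pose proof (sin_sq_range b hb) as hk2.
  assert (hk : 0 < sin b) by (apply sin_gt_0; pose proof PI_RGT_0; lra).
  pose proof (sin_abs_lt b phi hb hphi) as hs.
  unfold f1, f2, g1, g2, dtheta. rewrite (sin_theta _ _ hk hs), cos4_diff.
  apply Rabs_def2 in hs.
  set (k := sin b) in *. set (s := sin phi) in *.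
  replace (k ^ 2 * (s / k) ^ 2) with (s ^ 2) by (field; lra).
  assert (hA : 0 < k ^ 2 - s ^ 2) by nra.
  assert (hB : 0 < 2 - k ^ 2 - s ^ 2) by nra.
  rewrite sqrt_mult by lra.
  assert (0 < sqrt (k ^ 2 - s ^ 2)) by (apply sqrt_lt_R0; lra).
  assert (0 < sqrt (2 - k ^ 2 - s ^ 2)) by (apply sqrt_lt_R0; lra).
  replace (cos phi ^ 5) with (cos phi * (cos phi ^ 2) ^ 2) by ring.
  replace (cos phi ^ 3) with (cos phi * cos phi ^ 2) by ring.
  rewrite cos2_sin2. fold s. split; field; lra.
Qed.

Definition modulus (k : R) : R := k ^ 2 / (2 - k ^ 2).

Lemma modulus_range k : 0 < k ^ 2 < 1 -> 0 < modulus k < 1.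
Proof.
  intros hk. unfold modulus. split; [apply Rdiv_lt_0_compat; lra|].
  apply (Rmult_lt_reg_r (2 - k ^ 2)); [lra|].
  unfold Rdiv. rewrite Rmult_assoc, Rinv_l; lra.
Qed.

Lemma modulus_increasing k1 k2 :
  0 <= k1 ^ 2 -> k1 ^ 2 < k2 ^ 2 -> k2 ^ 2 < 2 -> modulus k1 < modulus k2.
Proof.
  intros h1 h2 h3. unfold modulus.
  apply (Rmult_lt_reg_r ((2 - k1 ^ 2) * (2 - k2 ^ 2))); [nra|].
  field_simplify; lra.
Qed.

Lemma radicands_in_W k t : k ^ 2 < 1 ->
  2 - k ^ 2 - k ^ 2 * sin t ^ 2 = (2 - k ^ 2) * W (modulus k) t /\
  1 - k ^ 2 * sin t ^ 2 = (2 - k ^ 2) * (W (modulus k) t - (1 - modulus k) / 2).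
Proof. intros hk. unfold W, modulus. split; field; lra. Qed.

Lemma g2_in_W k t : 0 < k ^ 2 < 1 ->
  g2 k t = sqrt (2 - k ^ 2) * sqrt (W (modulus k) t)
           + (- (sqrt (2 - k ^ 2) * (1 - modulus k) / 2)) * / sqrt (W (modulus k) t).
Proof.
  intros hk. pose proof (modulus_range k hk) as hm.
  destruct (radicands_in_W k t ltac:(lra)) as [e1 e2].
  set (m := modulus k) in *. set (a := sqrt (2 - k ^ 2)).
  assert (ha : 0 < a) by (apply sqrt_lt_R0; lra).
  assert (haa : a * a = 2 - k ^ 2) by (apply sqrt_sqrt; lra).
  destruct (sqrtW_facts m t ltac:(lra)) as [hw [hr hrr]].
  unfold g2. rewrite e1, e2, sqrt_mult by lra. fold a. rewrite <- haa.
  set (r := sqrt (W m t)) in *. rewrite <- hrr. field. lra.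
Qed.

Lemma g1_in_W k t : 0 < k ^ 2 < 1 ->
  g1 k t = sqrt (2 - k ^ 2) ^ 3 * (W (modulus k) t * sqrt (W (modulus k) t))
           + (- (1 - modulus k) * sqrt (2 - k ^ 2) ^ 3) * sqrt (W (modulus k) t)
           + ((1 - modulus k) ^ 2 / 4 * sqrt (2 - k ^ 2) ^ 3) * / sqrt (W (modulus k) t).
Proof.
  intros hk. pose proof (modulus_range k hk) as hm.
  destruct (radicands_in_W k t ltac:(lra)) as [e1 e2].
  set (m := modulus k) in *. set (a := sqrt (2 - k ^ 2)).
  assert (ha : 0 < a) by (apply sqrt_lt_R0; lra).
  assert (haa : a * a = 2 - k ^ 2) by (apply sqrt_sqrt; lra).
  destruct (sqrtW_facts m t ltac:(lra)) as [hw [hr hrr]].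
  unfold g1. rewrite e1, e2, sqrt_mult by lra. fold a. rewrite <- haa.
  set (r := sqrt (W m t)) in *. rewrite <- hrr. field. lra.
Qed.

Lemma g_continuous k t : 0 < k ^ 2 < 1 -> continuous (g1 k) t /\ continuous (g2 k) t.
Proof.
  intros hk. pose proof (modulus_range k hk). split.
  - eapply continuous_ext; [intros x; symmetry; apply g1_in_W, hk|].
    apply (continuous_W_comp (fun w => sqrt (2 - k ^ 2) ^ 3 * (w * sqrt w)
        + (- (1 - modulus k) * sqrt (2 - k ^ 2) ^ 3) * sqrt w
        + ((1 - modulus k) ^ 2 / 4 * sqrt (2 - k ^ 2) ^ 3) * / sqrt w)); [|lra].
    apply derivable_on_pos_lin3;
      [exact derivable_pow32 | exact derivable_sqrt | exact derivable_inv_sqrt].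
  - eapply continuous_ext; [intros x; symmetry; apply g2_in_W, hk|].
    apply (continuous_W_comp (fun w => sqrt (2 - k ^ 2) * sqrt w
        + (- (sqrt (2 - k ^ 2) * (1 - modulus k) / 2)) * / sqrt w)); [|lra].
    apply derivable_on_pos_lin2; [exact derivable_sqrt | exact derivable_inv_sqrt].
Qed.

Lemma J2_eq k : 0 < k ^ 2 < 1 -> J2 k = sqrt (2 - k ^ 2) * denom (modulus k).
Proof.
  intros hk. pose proof (modulus_range k hk).
  unfold J2. rewrite (RInt_ext_R _ _ _ _ (fun t _ => g2_in_W k t hk)).
  rewrite (ellint_lin2 sqrt (fun w => / sqrt w))
    by first [exact derivable_sqrt | exact derivable_inv_sqrt | lra].
  unfold denom, ellE, ellK. field.
Qed.

Lemma J1_eq k : 0 < k ^ 2 < 1 -> J1 k = sqrt (2 - k ^ 2) ^ 3 * numer (modulus k).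
Proof.
  intros hk. pose proof (modulus_range k hk).
  unfold J1. rewrite (RInt_ext_R _ _ _ _ (fun t _ => g1_in_W k t hk)).
  rewrite (ellint_lin3 (fun w => w * sqrt w) sqrt (fun w => / sqrt w))
    by first [exact derivable_pow32 | exact derivable_sqrt
             | exact derivable_inv_sqrt | lra].
  pose proof (ellint_pow32 (modulus k) ltac:(lra)) as h32.
  replace (ellint (fun w => w * sqrt w) (modulus k))
    with (((4 - 2 * modulus k) * ellE (modulus k) - (1 - modulus k) * ellK (modulus k)) / 3)
    by lra.
  unfold numer, ellE, ellK. field.
Qed.

Lemma ratio_eq k : 0 < k ^ 2 < 1 -> J1 k / J2 k ^ 3 = ratio (modulus k).
Proof.
  intros hk. rewrite J1_eq, J2_eq by exact hk. unfold ratio.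
  assert (0 < sqrt (2 - k ^ 2)) by (apply sqrt_lt_R0; lra).
  pose proof (denom_pos (modulus k) (modulus_range k hk)).
  field. lra.
Qed.

Theorem proposition13 :
  exists I1 I2 : R -> R,
    (forall b, 0 < b -> b < PI / 2 ->
       improper_integral (f1 b) (- b) b (I1 b) /\
       improper_integral (f2 b) (- b) b (I2 b)) /\
    (forall b1 b2, 0 < b1 -> b1 < b2 -> b2 < PI / 2 ->
       I1 b2 / (I2 b2) ^ 3 < I1 b1 / (I2 b1) ^ 3).
Proof.
  exists (fun b => J1 (sin b)), (fun b => J2 (sin b)). split.
  - intros b h1 h2. assert (hb : 0 < b < PI / 2) by lra.
    pose proof (sin_sq_range b hb) as hk.
    split; apply improper_by_theta; try exact hb.
    + intros x. apply g_continuous, hk.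
    + intros phi hphi. apply (integrands_subst b phi hb hphi).
    + intros x. apply g_continuous, hk.
    + intros phi hphi. apply (integrands_subst b phi hb hphi).
  - intros b1 b2 h1 h2 h3.
    pose proof (sin_sq_range b1 ltac:(lra)). pose proof (sin_sq_range b2 ltac:(lra)).
    rewrite !ratio_eq by assumption.
    pose proof (modulus_range (sin b1) ltac:(assumption)).
    pose proof (modulus_range (sin b2) ltac:(assumption)).
    apply ratio_decreasing; try lra.
    apply modulus_increasing; try lra.
    assert (0 < sin b1) by (apply sin_gt_0; pose proof PI_RGT_0; lra).
    assert (sin b1 < sin b2) by (apply sin_increasing_1; pose proof PI_RGT_0; lra).
    nra.
Qed.
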